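(* Let $Q=ax^2+bxy+cy^2\in\mathcal{Q}_N(d_K)$ and let $P$ be a subgroup of $I_K(\mathfrak{n})$ with $P_{K,1}(\mathfrak{n})\subseteq P\subseteq P_K(\mathfrak{n})$. Then every class $C\in P_K(\mathfrak{n})/P$ can be written as $C=[(u\omega_Q+v)\mathcal{O}_K]$ for some integers $u,v$, not both zero, such that $\gcd(N,\,Q(v,-u))=1$.
   Context: Let $K$ be an imaginary quadratic field with discriminant $d_K$ and ring of integers $\mathcal{O}_K$. Let $N$ be a positive integer and $\mathfrak{n}=N\mathcal{O}_K$. $I_K(\mathfrak{n})$ denotes the group of fractional ideals of $K$ relatively prime to $\mathfrak{n}$, $P_K(\mathfrak{n})$ its subgroup of principal fractional ideals, and $P_{K,1}(\mathfrak{n})=\{\nu\mathcal{O}_K:\nu\in K^*,\ \nu\equiv^*1\pmod{\mathfrak{n}}\}$, where $\equiv^*$ is multiplicative congruence. $\mathcal{Q}(d_K)$ is the set of primitive positive definite binary quadratic forms $ax^2+bxy+cy^2\in\mathbb{Z}[x,y]$ with $b^2-4ac=d_K$, and $\mathcal{Q}_N(d_K)=\{ax^2+bxy+cy^2\in\mathcal{Q}(d_K):\gcd(N,a)=1\}$. For $Q=ax^2+bxy+cy^2\in\mathcal{Q}(d_K)$, $\omega_Q=(-b+\sqrt{d_K})/(2a)$, the root of $Q(x,1)$ in the upper half-plane $\mathbb{H}$. *)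

(* K = Q(sqrt dK) is realised inside algC. *)
From HB Require Import structures.
From mathcomp Require Import all_boot all_order all_algebra all_field.
Set Implicit Arguments. Unset Strict Implicit. Unset Printing Implicit Defensive.
Import Order.TTheory GRing.Theory Num.Theory.
Local Open Scope ring_scope.

Definition sqfree_nat (n : nat) : Prop :=
  forall p : nat, prime p -> ~~ (p * p %| n)%N.

Definition fund_disc (d : int) : Prop :=
  ((d %% 4)%Z = 1 /\ sqfree_nat `|d|%N) \/
  (exists m : int, d = 4 * m /\ ((m %% 4)%Z = 2 \/ (m %% 4)%Z = 3)
                   /\ sqfree_nat `|m|%N).

(* sqrt(d_K) in algC: for d_K < 0 this is i*sqrt|d_K| (upper half-plane) *)
Definition sqrtd (d : int) : algC := sqrtC (d%:~R).

(* O_K = Z[tau], tau = (d_K + sqrt d_K)/2 *)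
Definition tauK (d : int) : algC := (d%:~R + sqrtd d) / 2%:R.

Definition in_OK (d : int) (z : algC) : Prop :=
  exists a b : int, z = a%:~R + b%:~R * tauK d.

Definition coprime_OK (d : int) (N : nat) (al : algC) : Prop :=
  in_OK d al /\
  exists x y : algC, in_OK d x /\ in_OK d y /\ al * x + N%:R * y = 1.

(* nu O_K is a (principal) fractional ideal in I_K(n):
   nu = alpha/beta with alpha, beta in O_K nonzero, coprime to n *)
Definition in_PKn (d : int) (N : nat) (nu : algC) : Prop :=
  exists al be : algC, coprime_OK d N al /\ coprime_OK d N be /\
    al != 0 /\ be != 0 /\ nu = al / be.

Definition mcong1 (d : int) (N : nat) (nu : algC) : Prop :=
  exists al be : algC, coprime_OK d N al /\ coprime_OK d N be /\
    al != 0 /\ be != 0 /\ nu = al / be /\ in_OK d ((al - be) / N%:R).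

Definition unit_OK (d : int) (e : algC) : Prop :=
  in_OK d e /\ e != 0 /\ in_OK d e^-1.

(* A subgroup P of I_K(n) with P_{K,1}(n) <= P <= P_K(n), encoded by the
   predicate "P nu  <->  nu O_K \in P" on generators nu in K^*. *)
Record admissible_P (d : int) (N : nat) (P : algC -> Prop) : Prop := {
  P_sub  : forall x, P x -> in_PKn d N x;
  P_one  : P 1;
  P_mul  : forall x y, P x -> P y -> P (x * y);
  P_inv  : forall x, P x -> P x^-1;
  P_unit : forall e x, unit_OK d e -> P x -> P (e * x);
  P_cong : forall x, mcong1 d N x -> P x }.

Definition in_QN (d : int) (N : nat) (a b c : int) : Prop :=
  0 < a /\ b ^+ 2 - 4 * a * c = d /\ gcdz (gcdz a b) c = 1 /\ coprimez N%:Z a.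

Definition Qval (a b c x y : int) : int := a * x ^+ 2 + b * x * y + c * y ^+ 2.

Definition omegaQ (d a b : int) : algC := ((- b)%:~R + sqrtd d) / (2 * a%:~R).

From HB Require Import structures.
From mathcomp Require Import all_boot all_order all_algebra all_field.
From mathcomp Require Import ring zify.
Set Implicit Arguments. Unset Strict Implicit. Unset Printing Implicit Defensive.
Import Order.TTheory GRing.Theory Num.Theory.
Local Open Scope ring_scope.

(* The number th = a * omega_Q is a root of X^2 + b X + a c, and since
   d_K = b^2 - 4 a c is congruent to b mod 2, O_K = Z[th]; moreover
   a (u omega_Q + v) = a v + u th.  Write nu = al / be with al, be prime to N
   and pick an integer U inverse to the norm be be^* modulo N, so that
   T = a U al be^* satisfies T be = a al mod N.  As a is invertible mod N, T is
   congruent mod N to some X = a v + u th with v <> 0.  Then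
   (u omega_Q + v) / nu = X be / (a al) is multiplicatively congruent to 1
   mod N, hence lies in P, and the norm of X, namely a Q(v, -u), is prime to N. *)

Lemma mul_succ_even (b : int) : exists m, b * (b + 1) = 2 * m.
Proof.
have b_div := divz_eq b 2; set q := (b %/ 2)%Z in b_div.
have r_ge0 := modz_ge0 b (isT : (2 : int) != 0).
have r_lt2 := ltz_pmod b (isT : (0 : int) < 2).
have [r0 | r1] : (b %% 2)%Z = 0 \/ (b %% 2)%Z = 1 by lia.
  by exists (q * b + q); rewrite {1}b_div r0; ring.
by exists (b * q + b); rewrite {2}b_div r1; ring.
Qed.

Lemma coprimez_solve_nz (a t : int) (N : nat) : coprimez a N -> (0 < N)%N ->
  exists v y : int, v != 0 /\ a * v = t - N%:Z * y.
Proof.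
move=> /coprimezP[[a' n'] /= aa'] N_gt0.
have a_inv : a * (a' * t) = t - N%:Z * (n' * t).
  by transitivity ((a' * a + n' * N%:Z) * t - N%:Z * (n' * t)); [ring | rewrite aa' mul1r].
have [v0 | v0] := eqVneq (a' * t) 0; last by exists (a' * t), (n' * t).
exists N%:Z, (n' * t - a); split; first by rewrite lt0r_neq0 // ltz_nat.
by transitivity (t - N%:Z * (n' * t) + N%:Z * a); [rewrite -a_inv v0 mulr0 add0r mulrC | ring].
Qed.

Section QuadraticOrder.

Variables (B C : int) (th : algC).
Hypothesis th_root : th ^+ 2 + B%:~R * th + C%:~R = 0.
Hypothesis th_nonreal : th \isn't Num.real.

Definition qemb (p : int * int) : algC := p.1%:~R + p.2%:~R * th.

Definition qnorm (p : int * int) : int := p.1 ^+ 2 - B * p.1 * p.2 + C * p.2 ^+ 2.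

Lemma conj_root : th^* = - B%:~R - th.
Proof.
have conj_th_root : th^* ^+ 2 + B%:~R * th^* + C%:~R = 0.
  by rewrite -(rmorph_int Num.conj) -(rmorph_int Num.conj C) -rmorphXn
    -!rmorphM -!rmorphD th_root rmorph0.
have : (th^* - th) * (th^* + th + B%:~R) = 0.
  by rewrite -[RHS](subrr 0) -{1}conj_th_root -th_root; ring.
move/eqP; rewrite mulf_eq0 subr_eq0 => /orP[th_real | ].
  by move: th_nonreal; rewrite CrealE th_real.
by rewrite -addrA addr_eq0 => /eqP ->; rewrite opprD addrC.
Qed.

Lemma qemb_eq0 p : qemb p = 0 -> p = (0, 0).
Proof.
case: p => x y; rewrite /qemb /=.
have [-> | y0] := eqVneq y 0.
  by rewrite mul0r addr0 => /eqP; rewrite intr_eq0 => /eqP ->.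
move=> /eqP; rewrite addr_eq0 => /eqP xy.
have y0' : y%:~R != 0 :> algC by rewrite intr_eq0.
have th_ratio : th = - x%:~R / y%:~R by rewrite xy opprK mulrC mulKf.
by move: th_nonreal; rewrite th_ratio rpredM ?rpredV ?rpredN ?realz.
Qed.

Lemma qembM p q : qemb p * qemb q =
  qemb (p.1 * q.1 - C * p.2 * q.2, p.1 * q.2 + p.2 * q.1 - B * p.2 * q.2).
Proof.
rewrite /qemb /=; transitivity
  (qemb (p.1 * q.1 - C * p.2 * q.2, p.1 * q.2 + p.2 * q.1 - B * p.2 * q.2)
   + (p.2 * q.2)%:~R * (th ^+ 2 + B%:~R * th + C%:~R)); first by rewrite /qemb /=; ring.
by rewrite th_root mulr0 addr0.
Qed.

Lemma qemb_conj p : (qemb p)^* = qemb (p.1 - B * p.2, - p.2).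
Proof. by rewrite /qemb rmorphD rmorphM !rmorph_int /= conj_root; ring. Qed.

Lemma qemb_norm p : qemb p * (qemb p)^* = (qnorm p)%:~R.
Proof. by rewrite qemb_conj qembM /qemb /qnorm /=; ring. Qed.

Lemma qemb_trace p : qemb p + (qemb p)^* = (2 * p.1 - B * p.2)%:~R.
Proof. by rewrite qemb_conj /qemb /=; ring. Qed.

Variables (d : int) (N : nat).
Hypothesis in_OK_qemb : forall z, in_OK d z <-> exists p, z = qemb p.

Lemma in_OK_int m : in_OK d m%:~R.
Proof. by apply/in_OK_qemb; exists (m, 0); rewrite /qemb /=; ring. Qed.

Lemma in_OKN z : in_OK d z -> in_OK d (- z).
Proof.
by move=> /in_OK_qemb[p ->]; apply/in_OK_qemb; exists (- p.1, - p.2); rewrite /qemb /=; ring.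
Qed.

Lemma in_OKD z w : in_OK d z -> in_OK d w -> in_OK d (z + w).
Proof.
move=> /in_OK_qemb[p ->] /in_OK_qemb[q ->]; apply/in_OK_qemb.
by exists (p.1 + q.1, p.2 + q.2); rewrite /qemb /=; ring.
Qed.

Lemma in_OKM z w : in_OK d z -> in_OK d w -> in_OK d (z * w).
Proof.
by move=> /in_OK_qemb[p ->] /in_OK_qemb[q ->]; apply/in_OK_qemb; rewrite qembM; eexists.
Qed.

Lemma in_OK_conj z : in_OK d z -> in_OK d z^*.
Proof. by move=> /in_OK_qemb[p ->]; apply/in_OK_qemb; rewrite qemb_conj; eexists. Qed.

Lemma coprime_OK_int m : coprimez m N -> coprime_OK d N m%:~R.
Proof.
move=> /coprimezP[[u v] /= uv]; split; first exact: in_OK_int.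
exists u%:~R, v%:~R; do 2?split; try exact: in_OK_int.
by rewrite -[N%:R]/(N%:Z%:~R) -!intrM -intrD mulrC [_ * v]mulrC uv.
Qed.

Lemma coprime_OK_conj z : coprime_OK d N z -> coprime_OK d N z^*.
Proof.
case=> z_OK [x [y [x_OK [y_OK zxy]]]]; split; first exact: in_OK_conj.
exists x^*, y^*; do 2?split; try exact: in_OK_conj.
by have := congr1 Num.conj zxy; rewrite rmorphD !rmorphM rmorph_nat rmorph1.
Qed.

Lemma coprime_OKM z w : coprime_OK d N z -> coprime_OK d N w -> coprime_OK d N (z * w).
Proof.
case=> z_OK [x [y [x_OK [y_OK zxy]]]] [w_OK [x' [y' [x'_OK [y'_OK wxy]]]]].
split; first exact: in_OKM.
exists (x * x'), (y + y' - N%:R * y * y').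
split; first exact: in_OKM.
split.
  exact: in_OKD (in_OKD y_OK y'_OK) (in_OKN (in_OKM (in_OKM (in_OK_int N) y_OK) y'_OK)).
have zx : z * x = 1 - N%:R * y by apply/eqP; rewrite eq_sym subr_eq zxy.
have wx' : w * x' = 1 - N%:R * y' by apply/eqP; rewrite eq_sym subr_eq wxy.
have -> : z * w * (x * x') = (z * x) * (w * x') by ring.
by rewrite zx wx'; ring.
Qed.

Lemma coprime_OKB z w : coprime_OK d N z -> in_OK d w -> coprime_OK d N (z - N%:R * w).
Proof.
case=> z_OK [x [y [x_OK [y_OK zxy]]]] w_OK.
split; first exact: in_OKD z_OK (in_OKN (in_OKM (in_OK_int N) w_OK)).
exists x, (y + w * x); do 2?split => //; first exact: in_OKD y_OK (in_OKM w_OK x_OK).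
by rewrite -[RHS]zxy; ring.
Qed.

Lemma coprime_OK_qnorm p : coprime_OK d N (qemb p) -> coprimez (qnorm p) N.
Proof.
case=> _ [_ [_ [/in_OK_qemb[q ->] [/in_OK_qemb[r ->] pqr]]]].
have pq : qemb p * qemb q = 1 - N%:R * qemb r by apply/eqP; rewrite eq_sym subr_eq pqr.
have norm_pq : qnorm q * qnorm p = 1 - N%:Z * (2 * r.1 - B * r.2 - N%:Z * qnorm r).
  apply: (@intr_inj algC); rewrite intrM -!qemb_norm.
  transitivity ((qemb p * qemb q) * (qemb p * qemb q)^*); first by rewrite rmorphM; ring.
  rewrite pq rmorphB rmorph1 rmorphM rmorph_nat.
  transitivity (1 - N%:R * (qemb r + (qemb r)^*) + N%:R ^+ 2 * (qemb r * (qemb r)^*)).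
    by ring.
  by rewrite qemb_trace qemb_norm; ring.
apply/coprimezP; exists (qnorm q, 2 * r.1 - B * r.2 - N%:Z * qnorm r).
by rewrite /= norm_pq; ring.
Qed.

Lemma coprime_OK_inv_mod z : (0 < N)%N -> coprime_OK d N z ->
  exists2 U : int, coprimez U N & in_OK d ((U%:~R * z * z^* - 1) / N%:R).
Proof.
move=> N_gt0 z_cop; have [/in_OK_qemb[p zE] _] := z_cop.
have [[U V] /= UV] : exists uv : int * int, uv.1 * qnorm p + uv.2 * N = 1.
  by apply/coprimezP/coprime_OK_qnorm; rewrite -zE.
exists U; first by apply/coprimezP; exists (qnorm p, V); rewrite /= -UV; ring.
have N0 : N%:R != 0 :> algC by rewrite pnatr_eq0 -lt0n.
have -> : (U%:~R * z * z^* - 1) / N%:R = - V%:~R.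
  have UqN : U * qnorm p = 1 - V * N by rewrite -UV; ring.
  by rewrite -mulrA zE qemb_norm -intrM UqN; field.
exact/in_OKN/in_OK_int.
Qed.

Lemma qemb_scaled_congr (a : int) t : coprimez a N -> (0 < N)%N -> in_OK d t ->
  exists v u y : int, v != 0 /\ qemb (a * v, u) = t - N%:R * y%:~R.
Proof.
move=> a_N N_gt0 /in_OK_qemb[pt ->].
have [v [y [v0 avE]]] := coprimez_solve_nz pt.1 a_N N_gt0.
by exists v, pt.2, y; split => //; rewrite /qemb avE /=; ring.
Qed.

Lemma scaled_rep_mcong1 (a : int) al be : (0 < N)%N -> a != 0 -> coprimez a N ->
  coprime_OK d N al -> coprime_OK d N be -> al != 0 -> be != 0 ->
  exists v u : int, [/\ v != 0, coprime_OK d N (qemb (a * v, u))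
    & mcong1 d N (qemb (a * v, u) * be / (a%:~R * al))].
Proof.
move=> N_gt0 a0 a_N al_cop be_cop al0 be0.
have [[al_OK _] [be_OK _]] := (al_cop, be_cop).
have [U U_N be_inv] := coprime_OK_inv_mod N_gt0 be_cop.
set T := (a * U)%:~R * al * be^*.
have T_cop : coprime_OK d N T.
  apply: coprime_OKM; last exact: coprime_OK_conj.
  by apply: coprime_OKM => //; apply: coprime_OK_int; rewrite coprimezMl a_N.
have [v [u [y [v0 X_T]]]] := qemb_scaled_congr a_N N_gt0 (proj1 T_cop).
set X := qemb (a * v, u).
have X_cop : coprime_OK d N X by rewrite /X X_T; exact: coprime_OKB (in_OK_int y).
exists v, u; split => //.
exists (X * be), (a%:~R * al); split; first exact: coprime_OKM.
split; first exact: coprime_OKM (coprime_OK_int a_N) al_cop.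
split.
  rewrite mulf_neq0 // /X; apply/eqP => /qemb_eq0[/eqP].
  by rewrite mulf_eq0 (negbTE a0) (negbTE v0).
split; first by rewrite mulf_neq0 ?intr_eq0.
split=> //.
have N0 : N%:R != 0 :> algC by rewrite pnatr_eq0 -lt0n.
have -> : (X * be - a%:~R * al) / N%:R =
    a%:~R * al * ((U%:~R * be * be^* - 1) / N%:R) - y%:~R * be.
  by rewrite /X X_T /T intrM; field.
exact: in_OKD (in_OKM (in_OKM (in_OK_int a) al_OK) be_inv)
  (in_OKN (in_OKM (in_OK_int y) be_OK)).
Qed.

End QuadraticOrder.

Lemma in_OK_shift d th e : tauK d = th + e%:~R ->
  forall z, in_OK d z <-> exists p, z = qemb th p.
Proof.
move=> tauE z; split.
  by case=> [x [y ->]]; exists (x + y * e, y); rewrite /qemb tauE /=; ring.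
by case=> [[x y] ->]; exists (x - y * e), y; rewrite /qemb tauE /=; ring.
Qed.

Lemma a_omegaQ d a b : a != 0 -> a%:~R * omegaQ d a b = ((- b)%:~R + sqrtd d) / 2.
Proof. by move=> a0; rewrite /omegaQ; field; rewrite intr_eq0 a0. Qed.

Lemma a_omegaQ_root d a b c : a != 0 -> b ^+ 2 - 4 * a * c = d ->
  (a%:~R * omegaQ d a b) ^+ 2 + b%:~R * (a%:~R * omegaQ d a b) + (a * c)%:~R = 0.
Proof.
move=> a0 disc; rewrite a_omegaQ //.
transitivity ((sqrtd d ^+ 2 - (b ^+ 2 - 4 * a * c)%:~R) / 4 : algC); first by field.
by rewrite sqrtCK disc subrr mul0r.
Qed.

Lemma a_omegaQ_nonreal d a b : a != 0 -> d < 0 -> a%:~R * omegaQ d a b \isn't Num.real.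
Proof.
move=> a0 d_lt0; apply/negP; rewrite a_omegaQ // => th_real.
have : sqrtd d \is Num.real.
  have -> : sqrtd d = 2 * (((- b)%:~R + sqrtd d) / 2) + b%:~R by field.
  by apply: rpredD; [apply: rpredM th_real; apply: realn | apply: realz].
by rewrite realEsqr /sqrtd sqrtCK ler0z leNgt d_lt0.
Qed.

Lemma tauK_a_omegaQ d a b c : a != 0 -> b ^+ 2 - 4 * a * c = d ->
  exists e : int, tauK d = a%:~R * omegaQ d a b + e%:~R.
Proof.
move=> a0 disc; have [m bm] := mul_succ_even b.
exists (m - 2 * a * c); rewrite a_omegaQ // /tauK.
have -> : d = 2 * (m - 2 * a * c) - b by rewrite -disc; move: bm; lia.
by field.
Qed.

Lemma qnorm_Qval a b c u v : qnorm b (a * c) (a * v, u) = a * Qval a b c v (- u).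
Proof. by rewrite /qnorm /Qval /=; ring. Qed.

Theorem lemma2p2 (dK : int) (N : nat) (a b c : int) (P : algC -> Prop) :
  fund_disc dK -> dK < 0 -> (0 < N)%N ->
  in_QN dK N a b c -> admissible_P dK N P ->
  forall nu : algC, in_PKn dK N nu ->
  exists u v : int, (u != 0 \/ v != 0) /\
    coprimez N%:Z (Qval a b c v (- u)) /\
    P ((u%:~R * omegaQ dK a b + v%:~R) / nu).
Proof.
move=> _ dK_lt0 N_gt0 [a_gt0 [disc [_ N_a]]] P_adm nu.
case=> al [be [al_cop [be_cop [al0 [be0 ->]]]]].
have a0 : a != 0 by rewrite gt_eqF.
have a_N : coprimez a N by rewrite coprimez_sym.
have th_root := a_omegaQ_root a0 disc.
have th_nonreal := a_omegaQ_nonreal b a0 dK_lt0.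
have [e /in_OK_shift OK_qemb] := tauK_a_omegaQ a0 disc.
have [v [u [v0 X_cop X_cong]]] :=
  scaled_rep_mcong1 th_root th_nonreal OK_qemb N_gt0 a0 a_N al_cop be_cop al0 be0.
exists u, v; split; first by right.
split.
  have := coprime_OK_qnorm th_root th_nonreal OK_qemb X_cop.
  by rewrite qnorm_Qval coprimezMl => /andP[_]; rewrite coprimez_sym.
have -> : (u%:~R * omegaQ dK a b + v%:~R) / (al / be) =
    qemb (a%:~R * omegaQ dK a b) (a * v, u) * be / (a%:~R * al).
  by rewrite /qemb /=; field; rewrite al0 be0 intr_eq0 a0.
exact: P_cong P_adm _ X_cong.
Qed.
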